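(* Let $n\ge1$ and let $k$ be a field with $\mathrm{char}(k)\ne2$. There is a unique $n\times n$ quantum parameter matrix $\mathfrak{q}$ with $\mathrm{Stab}(\mathfrak{q})=\mathfrak{S}_n$, and for it $\mathrm{Aut}_{\mathrm{gr}}(S_{\mathfrak{q}}(k^n))\cong(k^\times)^n\rtimes\mathfrak{S}_n$. Moreover, $\mathfrak{S}_n$ is the only $2$-transitive permutation group acting on $[n]$ which is $\mathrm{Stab}(\mathfrak{q})$ for some $n\times n$ quantum parameter matrix $\mathfrak{q}$.
   Context: An $n\times n$ quantum parameter matrix is a matrix $\mathfrak{q}=(q_{ij})$ over $k$ with $q_{ii}=1$ and $q_{ij}q_{ji}=1$ for all $i,j$. $S_{\mathfrak{q}}(k^n)$ is the $k$-algebra generated by the standard basis $v_1,\dots,v_n$ of $k^n$ with relations $v_jv_i=q_{ij}v_iv_j$, graded by $\deg v_i=1$; $\mathrm{Aut}_{\mathrm{gr}}$ denotes its group of degree-preserving algebra automorphisms, viewed as a subgroup of $\mathrm{GL}(n,k)$. The blocks of $\mathfrak{q}$ are the classes of the partition of $[n]$ with $i\sim j$ iff rows $i,j$ are identical; with $r$ the number of blocks, $\mathfrak{S}_r$ permutes the blocks and $\mathrm{Stab}(\mathfrak{q})=\{\sigma\in\mathfrak{S}_r:|\sigma(B)|=|B|\text{ and }\mathfrak{q}_{BC}=\mathfrak{q}_{\sigma(B)\sigma(C)}\text{ for all blocks }B,C\}$, where $\mathfrak{q}_{BC}=(q_{ij})_{i\in B,j\in C}$. Saying $\mathrm{Stab}(\mathfrak{q})$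 is a given permutation group on $[n]$ means $\mathfrak{q}$ has $n$ blocks (necessarily the singletons $\{i\}$, identified with $i$) and $\mathrm{Stab}(\mathfrak{q})$ equals that group. In $(k^\times)^n\rtimes\mathfrak{S}_n$, $(k^\times)^n$ is the group of invertible diagonal matrices and $\mathfrak{S}_n$ acts by permuting coordinates. *)

From HB Require Import structures.
From mathcomp Require Import all_boot all_order all_algebra all_fingroup.
Set Implicit Arguments. Unset Strict Implicit. Unset Printing Implicit Defensive.
Import GRing.Theory.
Local Open Scope ring_scope.

Definition qpm (k : fieldType) (n : nat) (q : 'M[k]_n) : Prop :=
  (forall i, q i i = 1) /\ (forall i j, q i j * q j i = 1).

Definition same_row (k : fieldType) (n : nat) (q : 'M[k]_n) (i j : 'I_n) : Prop :=
  forall l, q i l = q j l.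

(* "Stab(q) is the permutation group G on [n]": q has n blocks (so the
   blocks are the singletons {i}, identified with i), and G consists exactly
   of the permutations sigma with |sigma {i}| = |{i}| (automatic) and
   q_{ {i} {j} } = q_{ sigma{i} sigma{j} }, i.e. q i j = q (sigma i) (sigma j). *)
Definition stab_is (k : fieldType) (n : nat) (q : 'M[k]_n)
    (G : {set {perm 'I_n}}) : Prop :=
  (forall i j, same_row q i j -> i = j) /\
  (forall s : {perm 'I_n}, s \in G <-> (forall i j, q i j = q (s i) (s j))).

Definition two_transitive (n : nat) (G : {set {perm 'I_n}}) : Prop :=
  forall i j i' j' : 'I_n, i != j -> i' != j' ->
    exists2 s, s \in G & (s i = i' /\ s j = j').

(* ---- The algebra S_q(k^n) = T(k^n)/I, described degreewise. ----
   Elements of the free algebra T(k^n) are represented by their coefficient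
   functions on words (seq 'I_n); the word w stands for v_{w_1}...v_{w_m}.
   A homogeneous element of degree d is a function vanishing off words of
   length d. *)

(* The generator u * (v_j v_i - q_ij v_i v_j) * w of the relation ideal I. *)
Definition relgen (k : fieldType) (n : nat) (q : 'M[k]_n)
    (u : seq 'I_n) (i j : 'I_n) (w : seq 'I_n) (x : seq 'I_n) : k :=
  (x == u ++ [:: j; i] ++ w)%:R - q i j * (x == u ++ [:: i; j] ++ w)%:R.

(* f lies in the degree-d component I_d of the two-sided ideal I generated by
   the relations v_j v_i - q_ij v_i v_j: f is a linear combination of the
   u * r_ij * w with |u| + 2 + |w| = d. *)
Definition inI (k : fieldType) (n : nat) (q : 'M[k]_n) (d : nat)
    (f : seq 'I_n -> k) : Prop :=
  exists c : nat -> seq 'I_n -> seq 'I_n -> 'I_n -> 'I_n -> k,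
    forall x, f x = \sum_(p < d.-1) \sum_(u : p.-tuple 'I_n)
                    \sum_(w : (d - 2 - p).-tuple 'I_n) \sum_(i : 'I_n) \sum_(j : 'I_n)
                      c p u w i j * relgen q u i j w x.

(* Degree-d component of the algebra endomorphism T(g) of T(k^n) induced by
   the linear map g (v_b |-> sum_a g a b v_a):
   T(g)(v_{t_1}...v_{t_d}) = sum_x prod_m g x_m t_m  v_{x_1}...v_{x_d}. *)
Definition tensg (k : fieldType) (n : nat) (d : nat) (g : 'M[k]_n)
    (f : seq 'I_n -> k) (x : seq 'I_n) : k :=
  if size x == d then
    \sum_(t : d.-tuple 'I_n) (\prod_(p <- zip x t) g p.1 p.2) * f t
  else 0.

(* Aut_gr(S_q(k^n)) viewed inside GL(n,k): g in GL(n,k) whose induced graded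
   algebra automorphism T(g) of the free algebra preserves the ideal I
   (equivalently, descends to a graded automorphism of S_q = T/I; every
   graded automorphism of S_q arises this way from its degree-1 part g). *)
Definition Aut_gr (k : fieldType) (n : nat) (q : 'M[k]_n) (g : 'M[k]_n) : Prop :=
  g \in unitmx /\ (forall d f, inI q d f -> inI q d (tensg d g f)).

(* The subgroup (k^x)^n \rtimes S_n of GL(n,k): invertible diagonal matrix
   times permutation matrix (monomial matrices). *)
Definition monomial (k : fieldType) (n : nat) (g : 'M[k]_n) : Prop :=
  exists (D : 'rV[k]_n) (s : 'S_n),
    (forall i, D 0 i != 0) /\ g = diag_mx D *m perm_mx s.

From HB Require Import structures.
From mathcomp Require Import all_boot all_order all_algebra all_fingroup.
From mathcomp Require Import zify ring.

Set Implicit Arguments.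
Unset Strict Implicit.
Unset Printing Implicit Defensive.
Import GRing.Theory.
Local Open Scope ring_scope.

(* If every permutation stabilises q, a transposition shows q_ji = q_ij, so
   q_ij^2 = 1; q_ij = 1 would make rows i and j equal, hence q_ij = -1 off the
   diagonal.  A monomial matrix diag(D) P_s sends the relation
   v_j v_i - q_ij v_i v_j to D_i D_j times the relation for (s i, s j), so it
   preserves the ideal as soon as s stabilises q.  Conversely, for g in
   Aut_gr the image of the relation v_j v_i + v_i v_j lies in I, whose degree
   2 part has no v_k v_k coefficient; that coefficient is 2 g_ki g_kj, so
   every row of the invertible matrix g has a single nonzero entry.  Finally,
   if Stab(q) is 2-transitive, q_ij = q_(s i)(s j) for any permutation s, by
   choosing an element of Stab(q) mapping (i, j) to (s i, s j). *)

Lemma sum_tuple_indicator (R : pzSemiRingType) (T : finType) d (a : seq T)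
    (F : seq T -> R) :
  size a = d -> \sum_(t : d.-tuple T) (tval t == a)%:R * F t = F a.
Proof.
move=> ha; have hb : size a == d by rewrite ha.
rewrite (bigD1 (Tuple hb)) //= eqxx mul1r big1 ?addr0 // => t ht.
by rewrite (negbTE (ht : tval t != a)) mul0r.
Qed.

Lemma sum_tuple0 (R : nmodType) (T : finType) (F : 0.-tuple T -> R) :
  \sum_(u : 0.-tuple T) F u = F [tuple].
Proof. by rewrite (big_pred1 [tuple]) // => u; rewrite [u]tuple0; apply/esym/eqP. Qed.

Lemma prod_zip_graph (R : comPzSemiRingType) (T : eqType) (D : T -> R) (s : T -> T)
    (x t : seq T) : size x = size t ->
  \prod_(p <- zip x t) (D p.1 * (s p.1 == p.2)%:R) =
  (t == map s x)%:R * \prod_(a <- x) D a.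
Proof.
elim: x t => [|a x IH] [|b t] //=; first by rewrite !big_nil mul1r.
case=> hs; rewrite !big_cons IH //= eqseq_cons (eq_sym b).
by case: (s a == b); case: (t == map s x); rewrite /= ?(mulr1, mul1r, mulr0, mul0r).
Qed.

Section QuantumAffineSpace.

Variables (k : fieldType) (n : nat).
Implicit Types (q g : 'M[k]_n) (s : 'S_n) (i j : 'I_n) (u w x : seq 'I_n).

Lemma monomial_mxE (D : 'rV[k]_n) s i j :
  (diag_mx D *m perm_mx s) i j = D 0 i * (s i == j)%:R.
Proof. by rewrite mul_diag_mx !mxE. Qed.

Lemma unitmx_monomial (D : 'rV[k]_n) s :
  (forall i, D 0 i != 0) -> diag_mx D *m perm_mx s \in unitmx.
Proof.
move=> hD; rewrite unitmx_mul unitmx_perm andbT unitmxE det_diag unitfE.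
exact/prodf_neq0.
Qed.

Lemma tensg_monomial (D : 'rV[k]_n) s d f x : size x = d ->
  tensg d (diag_mx D *m perm_mx s) f x = \prod_(a <- x) D 0 a * f (map s x).
Proof.
move=> hx; rewrite /tensg hx eqxx.
rewrite -(@sum_tuple_indicator _ _ d _ (fun t => \prod_(a <- x) D 0 a * f t));
  last by rewrite size_map.
apply: eq_bigr => t _; rewrite mulrA; congr (_ * _).
rewrite -prod_zip_graph ?size_tuple //.
by apply: eq_bigr => p _; rewrite monomial_mxE.
Qed.

Lemma relgen_map q s u i j w x :
  q (s i) (s j) = q i j ->
  relgen q (map s u) (s i) (s j) (map s w) (map s x) = relgen q u i j w x.
Proof.
move=> hq; have map_eq y z :
    (map s x == map s u ++ [:: s y; s z] ++ map s w) = (x == u ++ [:: y; z] ++ w).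
  by rewrite -[RHS](inj_eq (inj_map (@perm_inj _ s))) !map_cat.
by rewrite /relgen !map_eq hq.
Qed.

Lemma relgen_size q u i j w x :
  size x != (size u + 2 + size w)%N -> relgen q u i j w x = 0.
Proof.
move=> hs; have neq y z : (x == u ++ [:: y; z] ++ w) = false.
  by apply/eqP => e; move: hs; rewrite e !size_cat /=; lia.
by rewrite /relgen !neq mulr0 subr0.
Qed.

(* Both words in the support of a relation have the same letters. *)
Lemma relgen_scale_prod q (D : 'I_n -> k) u i j w x :
  \prod_(a <- x) D a * relgen q u i j w x =
  \prod_(a <- u ++ [:: i; j] ++ w) D a * relgen q u i j w x.
Proof.
rewrite /relgen !mulrBr; congr (_ - _).
  case: eqP => [->|_]; last by rewrite !mulr0.
  by rewrite !big_cat !big_cons !big_nil /= !mulr1 [D j * D i]mulrC.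
rewrite mulrCA [in RHS]mulrCA; congr (_ * _).
by case: (x =P u ++ [:: i; j] ++ w) => [->|_]; rewrite ?mulr0.
Qed.

Lemma map_tuple_perm_inj s p : injective (@map_tuple p _ _ s).
Proof. by move=> u v /(congr1 val) /(inj_map (@perm_inj _ s)) /val_inj. Qed.

Lemma inI_tensg_monomial q (D : 'rV[k]_n) s d f :
  (forall i j, q (s i) (s j) = q i j) ->
  inI q d f -> inI q d (tensg d (diag_mx D *m perm_mx s) f).
Proof.
move=> hs [c Hc].
exists (fun p u w a b => c p (map s u) (map s w) (s a) (s b) *
                         \prod_(e <- u ++ [:: a; b] ++ w) D 0 e) => x.
have [hx|hx] := eqVneq (size x) d; last first.
  rewrite /tensg (negbTE hx); symmetry.
  apply: big1 => p _; apply: big1 => u _; apply: big1 => w _.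
  apply: big1 => a _; apply: big1 => b _.
  by rewrite relgen_size ?mulr0 // !size_tuple; move: hx (ltn_ord p); lia.
rewrite tensg_monomial // Hc mulr_sumr; apply: eq_bigr => p _.
rewrite mulr_sumr (reindex_inj (@map_tuple_perm_inj s p)); apply: eq_bigr => u _.
rewrite mulr_sumr (reindex_inj (@map_tuple_perm_inj s _)); apply: eq_bigr => w _.
rewrite mulr_sumr (reindex_inj (@perm_inj _ s)); apply: eq_bigr => a _.
rewrite mulr_sumr (reindex_inj (@perm_inj _ s)); apply: eq_bigr => b _.
by rewrite /= relgen_map // mulrCA (relgen_scale_prod q (fun e => D 0 e)) mulrA.
Qed.

Lemma relgen_inI q i j : inI q 2 (relgen q [::] i j [::]).
Proof.
exists (fun p u w a b => ((a == i) && (b == j))%:R) => x.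
rewrite big_ord1 !sum_tuple0 /=; symmetry.
rewrite (bigD1 i) //= [X in _ + X]big1 => [|a /negPf ha]; last first.
  by apply: big1 => b _; rewrite ha mul0r.
rewrite addr0 (bigD1 j) //= [X in _ + X]big1 => [|b /negPf hb]; last first.
  by rewrite hb andbF mul0r.
by rewrite addr0 !eqxx mul1r.
Qed.

Lemma inI2_square_coef q f a :
  (forall i, q i i = 1) -> inI q 2 f -> f [:: a; a] = 0.
Proof.
move=> hd [c ->].
apply: big1 => p _; apply: big1 => u _; apply: big1 => w _.
apply: big1 => i _; apply: big1 => j _.
have [hs|hs] := eqVneq (size [:: a; a]) (size u + 2 + size w)%N; last first.
  by rewrite relgen_size ?mulr0.
have hu : tval u = [::] by apply/size0nil; move: hs => /=; lia.
have hw : tval w = [::] by apply/size0nil; move: hs => /=; lia.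
rewrite /relgen hu hw /=.
have [->|ij] := eqVneq i j; first by rewrite hd mul1r subrr mulr0.
have neq y z : y != z -> ([:: a; a] == [:: y; z]) = false.
  by move=> yz; apply/eqP => -[ay az]; rewrite -ay -az eqxx in yz.
have ji : j != i by rewrite eq_sym.
by rewrite !neq // mulr0 subrr mulr0.
Qed.

Lemma tensg_relgen_square q g i j a :
  tensg 2 g (relgen q [::] i j [::]) [:: a; a] =
  g a j * g a i - q i j * (g a i * g a j).
Proof.
pose P (t : seq 'I_n) := \prod_(p <- zip [:: a; a] t) g p.1 p.2.
rewrite /tensg /= /relgen /=.
transitivity (\sum_(t : 2.-tuple 'I_n) (tval t == [:: j; i])%:R * P t -
   \sum_(t : 2.-tuple 'I_n) (tval t == [:: i; j])%:R * (q i j * P t)).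
  by rewrite -sumrB; apply: eq_bigr => t _; rewrite /P; ring.
rewrite (@sum_tuple_indicator _ _ 2 _ P) //.
rewrite (@sum_tuple_indicator _ _ 2 _ (fun t => q i j * P t)) //.
by rewrite /P /= !big_cons !big_nil /= !mulr1.
Qed.

Lemma Aut_gr_row_support q g :
  (2%:R : k) != 0 -> (forall i, q i i = 1) -> (forall i j, i != j -> q i j = -1) ->
  Aut_gr q g -> forall a i j, i != j -> g a i * g a j = 0.
Proof.
move=> two hd hoff [_ hg] a i j ij.
have := inI2_square_coef a hd (hg _ _ (relgen_inI q i j)).
rewrite tensg_relgen_square hoff // mulN1r opprK [g a j * _]mulrC -mulr2n.
by rewrite -mulr_natl => /eqP; rewrite mulf_eq0 (negbTE two) => /eqP.
Qed.

Lemma unitmx_col_neq0 g j : g \in unitmx -> exists r, g r j != 0.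
Proof.
move=> gu; apply/existsP; apply: contraT => /existsPn g0.
have /matrixP/(_ j j) := mulVmx gu; rewrite !mxE eqxx /= big1 => [|r _].
  by move/eqP; rewrite eq_sym oner_eq0.
by rewrite (eqP (negPn (g0 r))) mulr0.
Qed.

Lemma monomial_of_row_support g : g \in unitmx ->
  (forall a i j, i != j -> g a i * g a j = 0) -> monomial g.
Proof.
move=> gu zp.
pose r j := odflt j [pick a | g a j != 0].
have hr j : g (r j) j != 0.
  rewrite /r; case: pickP => [//|g0].
  by have [a] := unitmx_col_neq0 j gu; rewrite g0.
have rinj : injective r.
  move=> j j' e; apply: contraTeq (hr j) => jj; apply/negPn.
  by have /eqP := zp (r j) j j' jj; rewrite mulf_eq0 {2}e (negbTE (hr j')) orbF.
pose s := (perm rinj)^-1%g.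
have rs i : r (s i) = i by rewrite -(permE rinj) permKV.
exists (\row_i g i (s i)), s; split=> [i|]; first by rewrite mxE -{1}(rs i) hr.
apply/matrixP => i j; rewrite monomial_mxE mxE.
have [<-|ne] := eqVneq (s i) j; first by rewrite mulr1.
apply/eqP; rewrite mulr0; have /eqP := zp i _ _ ne; rewrite mulf_eq0.
by rewrite -{1}(rs i) (negbTE (hr _)).
Qed.

Definition minus_one_qpm : 'M[k]_n := \matrix_(i, j) (if i == j then 1 else -1).

Lemma qpm_minus_one : qpm minus_one_qpm.
Proof.
split=> [i|i j]; first by rewrite mxE eqxx.
by rewrite !mxE eq_sym; case: eqP; rewrite ?mulr1 ?mulrNN ?mulr1.
Qed.

Lemma stab_minus_one : (2%:R : k) != 0 -> stab_is minus_one_qpm [set: 'S_n].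
Proof.
move=> two; split=> [i j /(_ i)|s]; last first.
  by rewrite inE; split=> // _ i j; rewrite !mxE (inj_eq perm_inj).
rewrite !mxE eqxx; have [//|_] := eqVneq j i.
by move=> e; move: two; rewrite mulr2n {1}e addNr eqxx.
Qed.

Lemma stab_setT_offdiag q : qpm q -> stab_is q [set: 'S_n] ->
  forall i j, i != j -> q i j = -1.
Proof.
move=> [hd hp] [hrow hst] i j ij.
have ht a b : q a b = q (tperm i j a) (tperm i j b) by apply/(hst _).1/in_setT.
have sym : q j i = q i j by rewrite [RHS]ht tpermL tpermR.
have n1 : q i j != 1.
  apply: contra_neq ij => e; apply: hrow => l.
  have [->|li] := eqVneq l i; first by rewrite hd sym e.
  have [->|lj] := eqVneq l j; first by rewrite hd e.
  by rewrite ht tpermL tpermD // eq_sym.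
have : (q i j - 1) * (q i j + 1) = 0.
  by rewrite mulrBl mul1r mulrDr mulr1 -{2}sym hp addrKA subrr.
by move/eqP; rewrite mulf_eq0 subr_eq0 (negbTE n1) addr_eq0 => /eqP.
Qed.

Lemma stab_setT_eq_minus_one q : qpm q -> stab_is q [set: 'S_n] ->
  q = minus_one_qpm.
Proof.
move=> hq hs; apply/matrixP => i j; rewrite mxE.
by have [->|ij] := eqVneq i j; [rewrite hq.1 | rewrite stab_setT_offdiag].
Qed.

Lemma two_transitive_stab_setT q (G : {set 'S_n}) :
  (forall i, q i i = 1) -> stab_is q G -> two_transitive G -> G = [set: 'S_n].
Proof.
move=> hd [_ hst] htt; apply/setP => s; rewrite inE; apply/(hst s) => i j.
have [->|ij] := eqVneq i j; first by rewrite !hd.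
have sij : s i != s j by rewrite (inj_eq perm_inj).
have [h hG [<- <-]] := htt i j (s i) (s j) ij sij.
exact/(hst h).1.
Qed.

End QuantumAffineSpace.

Theorem proposition3p1 (k : fieldType) (n : nat) :
  (0 < n)%N -> ~~ (2%N \in [pchar k]) ->
  (exists! q : 'M[k]_n, qpm q /\ stab_is q [set: {perm 'I_n}]) /\
  (forall q : 'M[k]_n, qpm q -> stab_is q [set: {perm 'I_n}] ->
     forall g : 'M[k]_n, Aut_gr q g <-> monomial g) /\
  (forall G : {group {perm 'I_n}}, two_transitive G ->
     (exists q : 'M[k]_n, qpm q /\ stab_is q G) -> G = [set: {perm 'I_n}] :> {set _}).
Proof.
move=> _ h2; have two : (2%:R : k) != 0 by move: h2; rewrite inE.
split; last split.
- exists (minus_one_qpm k n); split=> [|q [hq hs]].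
    by split; [exact: qpm_minus_one | exact: stab_minus_one].
  exact/esym/stab_setT_eq_minus_one.
- move=> q hq hs g; split=> [hg|[D [s [hD ->]]]].
    apply: monomial_of_row_support; first by case: hg.
    exact: Aut_gr_row_support two hq.1 (stab_setT_offdiag hq hs) hg.
  split; first exact: unitmx_monomial.
  by move=> d f; apply: inI_tensg_monomial => i j; exact/esym/(hs.2 s).1/in_setT.
- by move=> G htt [q [hq hs]]; exact: two_transitive_stab_setT hq.1 hs htt.
Qed.
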